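(* Let $p \ge 2$, let $X \in L^p$ be a real valued random variable, and let $0 < r \le 2 \le s \le p$. Then $$\operatorname{Var}(X_+^{r/2})^{2/r} + \operatorname{Var}(X_-^{r/2})^{2/r} \le \operatorname{Var}(X) \le 2\left(\operatorname{Var}(X_+^{s/2})^{2/s} + \operatorname{Var}(X_-^{s/2})^{2/s}\right).$$
   Context: $X_+ = \max\{X,0\}$ and $X_- = -\min\{X,0\}$ are the positive and negative parts of $X$; $\operatorname{Var}(Y) = E(Y^2)-(EY)^2$. *)

From mathcomp Require Import all_boot all_order all_algebra.
From mathcomp Require Import all_classical all_reals all_analysis.
Set Implicit Arguments. Unset Strict Implicit. Unset Printing Implicit Defensive.
Import Order.TTheory GRing.Theory Num.Theory.
Local Open Scope ring_scope.

Definition pos_part (T : Type) (R : realType) (X : T -> R) : T -> R :=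
  fun t => Num.max (X t) 0.
Definition neg_part (T : Type) (R : realType) (X : T -> R) : T -> R :=
  fun t => - Num.min (X t) 0.

From mathcomp Require Import all_boot all_order all_algebra.
From mathcomp Require Import all_classical all_reals all_analysis.
From mathcomp Require Import measurable_realfun.
From mathcomp Require Import ring lra.
Set Implicit Arguments. Unset Strict Implicit. Unset Printing Implicit Defensive.
Import Order.TTheory GRing.Theory Num.Theory.
Local Open Scope ring_scope.

(* Write X = Y - Z with Y = X_+ and Z = X_- nonnegative and Y Z = 0.  Then
   Cov(Y, Z) = -E[Y] E[Z] <= 0, so Var X = Var Y + Var Z - 2 Cov(Y, Z) is at
   least Var Y + Var Z, and Var(Y + Z) >= 0 bounds it by 2 (Var Y + Var Z).
   The powers are handled by Var(W^g) <= (Var W)^g for W >= 0 and 0 < g <= 1: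
   since t |-> t^g is g-Hoelder with constant 1, Var(W^g) <= E[(W^g - m^g)^2]
   <= E[|W - m|^(2g)] <= E[(W - m)^2]^g by Jensen, where m = E[W].  Take
   g = r/2 for the lower bound and apply it to W = X_+^(s/2), g = 2/s for the
   upper one. *)

Section powR_inequalities.
Variable R : realType.
Implicit Types a b g x y : R.

Lemma ge0_ger1_powR x g : 0 <= x <= 1 -> g <= 1 -> x <= x `^ g.
Proof.
move=> /andP[x0 x1] g1; have [->|xn0] := eqVneq x 0; first exact: powR_ge0.
by apply: ger1_powR => //; rewrite lt_neqAle eq_sym xn0 x0.
Qed.

Lemma powRD_le a b g : 0 <= a -> 0 <= b -> g <= 1 ->
  (a + b) `^ g <= a `^ g + b `^ g.
Proof.
move=> a0 b0 g1; have [ab0|abn0] := eqVneq (a + b) 0.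
  move: ab0 => /eqP; rewrite paddr_eq0 // => /andP[/eqP -> /eqP ->].
  by rewrite addr0 lerDl powR_ge0.
have ab_gt0 : 0 < a + b by rewrite lt_neqAle eq_sym abn0 addr_ge0.
(* a^g = (a+b)^g (a/(a+b))^g >= (a+b)^g (a/(a+b)), and likewise for b *)
have frac_le c : 0 <= c <= a + b -> (a + b) `^ g * (c / (a + b)) <= c `^ g.
  move=> /andP[c0 cab]; have cq0 : 0 <= c / (a + b) by rewrite divr_ge0 // ltW.
  rewrite -{2}(divfK abn0 c) powRM ?(ltW ab_gt0) // [leRHS]mulrC.
  by rewrite ler_wpM2l ?powR_ge0 // ge0_ger1_powR // cq0 /= ler_pdivrMr // mul1r.
apply: le_trans (lerD (frac_le a _) (frac_le b _)); last 2 first.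
- by rewrite a0 lerDl.
- by rewrite b0 lerDr.
by rewrite -mulrDr -mulrDl divff ?gt_eqF // mulr1.
Qed.

Lemma dist_powR_le x y g : 0 <= x -> 0 <= y -> 0 <= g -> g <= 1 ->
  `|x `^ g - y `^ g| <= `|x - y| `^ g.
Proof.
move=> x0 y0 g0 g1.
wlog yx : x y x0 y0 / y <= x.
  move=> H; have [/H|/ltW xy] := leP y x; first exact.
  by rewrite distrC [`|x - y|]distrC; apply: H.
have yx_g : y `^ g <= x `^ g by apply: ge0_ler_powR.
rewrite !ger0_norm ?subr_ge0 // lerBlDr.
by rewrite -{1}(subrK y x) powRD_le ?subr_ge0.
Qed.

Lemma powR_le1D x a b : 0 <= x -> 0 <= a -> a <= b -> x `^ a <= 1 + x `^ b.
Proof.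
move=> x0 a0 ab; have [x1|x1] := leP x 1.
  apply: (@le_trans _ _ 1); last by rewrite lerDl powR_ge0.
  rewrite [leRHS](_ : 1 = 1 `^ a); last by rewrite powR1.
  by rewrite ge0_ler_powR // nnegrE.
apply: (@le_trans _ _ (x `^ b)); last by rewrite lerDr ler01.
exact: ler_powR (ltW x1) _ _ ab.
Qed.

End powR_inequalities.

Lemma poweRV_le (R : realType) (x y : \bar R) (a : R) :
  (0 <= x)%E -> (0 <= y)%E -> 0 < a -> (x <= y `^ a)%E -> (x `^ a^-1 <= y)%E.
Proof.
move=> x0 y0 a0 xya; have a_inv0 : 0 <= a^-1 by rewrite invr_ge0 ltW.
apply: le_trans (gt0_ler_poweR a_inv0 _ _ xya) _.
- by rewrite in_itv /= x0 leey.
- by rewrite in_itv /= poweR_ge0 leey.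
by rewrite -poweRrM mulfV ?gt_eqF // poweRe1.
Qed.

Section positive_negative_parts.
Variables (T : Type) (R : realType) (X : T -> R).

Lemma pos_part_ge0 t : 0 <= pos_part X t.
Proof. by rewrite /pos_part le_max lexx orbT. Qed.

Lemma neg_part_ge0 t : 0 <= neg_part X t.
Proof. by rewrite /neg_part oppr_ge0 ge_min lexx orbT. Qed.

Lemma neg_partE : neg_part X = pos_part (\- X).
Proof. by apply/funext => t; rewrite /neg_part /pos_part oppr_min oppr0. Qed.

Lemma pos_neg_partE : X = pos_part X \- neg_part X.
Proof.
apply/funext => t; rewrite /pos_part /neg_part /= opprK.
by case: leP; rewrite ?add0r ?addr0.
Qed.

Lemma pos_neg_partM : pos_part X \* neg_part X = cst 0.
Proof.
apply/funext => t; rewrite /pos_part /neg_part /=.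
by case: leP; rewrite ?mul0r ?oppr0 ?mulr0.
Qed.

Lemma pos_part_le_norm t : pos_part X t <= `|X t|.
Proof. by rewrite /pos_part ge_max ler_norm normr_ge0. Qed.

Lemma neg_part_le_norm t : neg_part X t <= `|X t|.
Proof.
by rewrite neg_partE /pos_part ge_max /= -normrN ler_norm normr_ge0.
Qed.

End positive_negative_parts.

Section Lfun_domination.
Context d (T : measurableType d) (R : realType).
Local Open Scope ereal_scope.

Lemma Lfun_dominated (mu : {measure set T -> \bar R}) (q : R) (f h : T -> R) :
  measurable_fun setT f -> mu.-integrable setT (EFin \o h) ->
  (forall t, `|f t| `^ q <= h t)%R -> f \in Lfun mu q%:E.
Proof.
move=> mf /integrableP[mh hfin] fh.
rewrite inE; apply/andP; split; first by rewrite inE.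
rewrite inE /= /finite_norm unlock /Lnorm; apply: poweR_lty.
apply: le_lt_trans hfin; apply: ge0_le_integral => //.
- by move=> t _; exact: poweR_ge0.
- apply/measurable_EFinP/(measurableT_comp (measurable_powR _)).
  exact: measurableT_comp.
- exact: measurableT_comp.
- move=> t _ /=; rewrite lee_fin [`|h t|%R]ger0_norm ?fh //.
  exact: le_trans (powR_ge0 _ _) (fh t).
Qed.

Lemma Lfun_le_norm (mu : {measure set T -> \bar R}) (q : R) (f g : T -> R) :
  (1 <= q)%R -> measurable_fun setT f -> g \in Lfun mu q%:E ->
  (forall t, `|f t| <= `|g t|)%R -> f \in Lfun mu q%:E.
Proof.
move=> q1 mf gq fg; apply: Lfun_dominated mf (Lfun_integrable q1 gq) _ => t.
by rewrite ge0_ler_powR ?(le_trans ler01 q1) ?nnegrE.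
Qed.

Lemma Lfun2_powR (mu : {finite_measure set T -> \bar R}) (q g : R) (W : T -> R) :
  (forall t, 0 <= W t)%R -> (1 <= q)%R -> W \in Lfun mu q%:E ->
  (0 <= g)%R -> (g * 2 <= q)%R -> (fun t => W t `^ g)%R \in Lfun mu 2%:E.
Proof.
move=> W0 q1 Wq g0 g2q.
have mW : measurable_fun setT W by move: Wq; rewrite inE => /andP[/[!inE]].
apply: (@Lfun_dominated _ _ _ (fun t => 1 + `|W t| `^ q)%R).
- exact: measurableT_comp (measurable_powR _) mW.
- rewrite (_ : EFin \o _ = (EFin \o cst 1%R) \+ (fun t => (`|W t| `^ q)%:E)) //.
  apply: integrableD => //; first exact: finite_measure_integrable_cst.
  exact: Lfun_integrable q1 Wq.
- move=> t; rewrite ger0_norm ?powR_ge0 // -powRrM ger0_norm //.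
  by rewrite powR_le1D // mulr_ge0.
Qed.

Lemma Lfun_pos_part (mu : {measure set T -> \bar R}) (q : R) (X : T -> R) :
  (1 <= q)%R -> X \in Lfun mu q%:E -> pos_part X \in Lfun mu q%:E.
Proof.
move=> q1 Xq.
have mX : measurable_fun setT X by move: Xq; rewrite inE => /andP[/[!inE]].
apply: Lfun_le_norm q1 _ Xq _; first exact: measurable_maxr.
by move=> t; rewrite ger0_norm ?pos_part_ge0 ?pos_part_le_norm.
Qed.

Lemma Lfun_neg_part (mu : {measure set T -> \bar R}) (q : R) (X : T -> R) :
  (1 <= q)%R -> X \in Lfun mu q%:E -> neg_part X \in Lfun mu q%:E.
Proof.
move=> q1 Xq.
have mX : measurable_fun setT X by move: Xq; rewrite inE => /andP[/[!inE]].
apply: Lfun_le_norm q1 _ Xq _.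
  by rewrite neg_partE; apply: measurable_maxr => //; exact: measurableT_comp.
by move=> t; rewrite ger0_norm ?neg_part_ge0 ?neg_part_le_norm.
Qed.

End Lfun_domination.

Section probability_powR.
Context d (T : measurableType d) (R : realType) (P : probability T R).
Local Open Scope ereal_scope.

Lemma integral_powR_le (g : R) (f : T -> R) : measurable_fun setT f ->
  (0 < g)%R -> (g <= 1)%R ->
  \int[P]_t (`|f t| `^ g)%:E <= (\int[P]_t `|f t|%:E) `^ g.
Proof.
move=> mf g0 g1; have [->|gn1] := eqVneq g 1%R.
  under eq_integral do rewrite powRr1 //.
  by rewrite poweRe1 ?integral_ge0.
(* Hoelder with exponents 1/g and 1/(1-g), the second factor being 1 *)
have g_lt1 : (g < 1)%R by rewrite lt_neqAle gn1 g1.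
have mfg : measurable_fun setT (fun t => `|f t| `^ g)%R.
  by apply: measurableT_comp (measurable_powR _) _; exact: measurableT_comp.
have := @hoelder _ _ _ P _ (cst 1%R) g^-1 (1 - g)^-1 mfg (measurable_cst _).
rewrite !invr_gt0 g0 subr_gt0 g_lt1 !invrK addrC subrK => /(_ isT isT erefl).
rewrite Lnorm1 Lnorm_cst1 [X in X `^ _](_ : _ = 1); last exact: probability_setT.
rewrite poweR1r mule1 unlock /Lnorm invrK.
rewrite (eq_integral (fun t => (`|f t| `^ g)%:E)); last first.
  by move=> t _; rewrite /= mulr1 ger0_norm ?powR_ge0.
rewrite [X in _ <= X `^ _ -> _](eq_integral (fun t => `|f t|%:E)) //.
move=> t _ /=; rewrite ger0_norm ?powR_ge0 // -powRrM.
by rewrite divff ?gt_eqF // powRr1.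
Qed.

Lemma variance_le_expectation_sqr (U : T -> R) (c : R) : U \in Lfun P 2%:E ->
  'V_P[U] <= 'E_P[(U \- cst c) ^+ 2]%R.
Proof.
move=> U2; have Uc2 : (U \- cst c)%R \in Lfun P 2%:E.
  by apply: rpredB => //; [exact: lee1n | move=> ?; exact: Lfun_cst].
rewrite -(varianceB_cst_r c U2) varianceE // lee_subel_addr.
  by rewrite lee_paddr // sqre_ge0.
by rewrite expectation_fin_num // expr2 Lfun2_mul_Lfun1.
Qed.

Lemma variance_powR_le (W : T -> R) (g : R) : (forall t, 0 <= W t)%R ->
  W \in Lfun P 2%:E -> (0 < g)%R -> (g <= 1)%R ->
  'V_P[fun t => W t `^ g]%R <= 'V_P[W] `^ g.
Proof.
move=> W0 W2 g0 g1.
have mW : measurable_fun setT W by move: W2; rewrite inE => /andP[/[!inE]].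
set m := fine 'E_P[W].
have m0 : (0 <= m)%R by rewrite fine_ge0 // expectation_ge0.
have mWm : measurable_fun setT (fun t => (W t - m) ^+ 2)%R.
  exact/measurable_funX/measurable_funB.
apply: le_trans (variance_le_expectation_sqr (m `^ g) _) _.
  apply: Lfun2_powR W0 _ W2 _ _; first exact: ler1n; first exact: ltW.
  by rewrite -[leRHS]mul1r ler_wpM2r.
apply: (@le_trans _ _ 'E_P[fun t => `|(W t - m) ^+ 2| `^ g]%R).
  apply: expectation_le => //.
  - apply: (measurable_funX 2); apply: measurable_funB => //.
    exact: measurableT_comp (measurable_powR _) mW.
  - by apply: measurableT_comp (measurable_powR _) _; exact: measurableT_comp.
  - by move=> t; rewrite /= sqr_ge0.
  apply: aeW => t /=; rewrite normrX -powR_mulrn // -powRrM mulrC powRrM.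
  rewrite powR_mulrn ?powR_ge0 // -[leLHS]real_normK ?num_real //.
  by rewrite ler_sqr ?nnegrE ?powR_ge0 // dist_powR_le // ltW.
have -> : 'V_P[W] = \int[P]_t `|(W t - m) ^+ 2|%:E.
  rewrite /variance covariance.unlock -/m expectation.unlock.
  by apply: eq_integral => t _; rewrite /= ger0_norm ?sqr_ge0 // expr2.
by rewrite expectation.unlock integral_powR_le.
Qed.

Lemma variance_halfpowR_le (W : T -> R) (a : R) : (forall t, 0 <= W t)%R ->
  W \in Lfun P 2%:E -> (0 < a)%R -> (a <= 2)%R ->
  'V_P[fun t => W t `^ (a / 2)]%R `^ (2 / a) <= 'V_P[W].
Proof.
move=> W0 W2 a0 a2; rewrite -[(2 / a)%R]invf_div.
apply: poweRV_le; rewrite ?variance_ge0 ?divr_gt0 //.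
by apply: variance_powR_le; rewrite ?divr_gt0 ?ler_pdivrMr ?mul1r.
Qed.

Lemma variance_le_halfpowR (W : T -> R) (q a : R) : (forall t, 0 <= W t)%R ->
  (1 <= q)%R -> W \in Lfun P q%:E -> (2 <= a)%R -> (a <= q)%R ->
  'V_P[W] <= 'V_P[fun t => W t `^ (a / 2)]%R `^ (2 / a).
Proof.
move=> W0 q1 Wq a2 aq; have a0 : (0 < a)%R by rewrite (lt_le_trans _ a2).
have Wa2 : (fun t => W t `^ (a / 2))%R \in Lfun P 2%:E.
  by apply: Lfun2_powR W0 q1 Wq _ _; rewrite ?divfK // divr_ge0 // ltW.
have := @variance_powR_le _ (2 / a)%R (fun t => powR_ge0 _ _) Wa2.
rewrite divr_gt0 // ler_pdivrMr // mul1r => /(_ isT a2).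
have a2K : (a / 2 * (2 / a) = 1)%R by field; rewrite gt_eqF.
suff -> : (fun t => (W t `^ (a / 2)) `^ (2 / a))%R = W by [].
by apply/funext => t; rewrite -powRrM a2K powRr1.
Qed.

End probability_powR.

Section variance_of_difference.
Context d (T : measurableType d) (R : realType) (P : probability T R).
Local Open Scope ereal_scope.

Lemma varianceB_le (Y Z : T -> R) : Y \in Lfun P 2%:E -> Z \in Lfun P 2%:E ->
  'V_P[Y \- Z]%R <= 2%:E * ('V_P[Y] + 'V_P[Z]).
Proof.
move=> Y2 Z2.
have Pfin : P setT \is a fin_num := fin_num_measure P _ measurableT.
have cov_fin : covariance P Y Z \is a fin_num.
  by rewrite covariance_fin_num ?Lfun2_mul_Lfun1 ?Lfun_subset12.
have := variance_ge0 P (Y \+ Z)%R; rewrite varianceD // varianceB //.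
rewrite -(fineK (variance_fin_num Y2)) -(fineK (variance_fin_num Z2)).
rewrite -(fineK cov_fin).
by rewrite -!EFinM -!EFinD !lee_fin; lra.
Qed.

Lemma varianceB_ge (Y Z : T -> R) : Y \in Lfun P 2%:E -> Z \in Lfun P 2%:E ->
  covariance P Y Z <= 0 -> 'V_P[Y] + 'V_P[Z] <= 'V_P[Y \- Z]%R.
Proof.
move=> Y2 Z2 cov_le0.
by rewrite varianceB // lee_paddr // oppe_ge0 mule_ge0_le0.
Qed.

Lemma covariance_le0 (Y Z : T -> R) : (forall t, 0 <= Y t)%R ->
  (forall t, 0 <= Z t)%R -> (Y \* Z = cst 0)%R ->
  Y \in Lfun P 1 -> Z \in Lfun P 1 -> covariance P Y Z <= 0.
Proof.
move=> Y0 Z0 YZ0 Y1 Z1; have YZ1 : (Y * Z)%R \in Lfun P 1.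
  by rewrite [X in X \in _]YZ0; exact: Lfun_cst.
rewrite covarianceE // [X in 'E_P[X]]YZ0 expectation_cst sub0e oppe_le0.
by rewrite mule_ge0 ?expectation_ge0.
Qed.

End variance_of_difference.

Local Open Scope ereal_scope.

Theorem corollary3p3 (d : measure_display) (T : measurableType d) (R : realType)
    (P : probability T R) (p : R) (X : {RV P >-> R}) (r s : R) :
  (2 <= p)%R -> (X : T -> R) \in Lfun P p%:E ->
  (0 < r)%R -> (r <= 2)%R -> (2 <= s)%R -> (s <= p)%R ->
  'V_P[fun t => (pos_part X t `^ (r / 2))%R] `^ (2 / r)%R
    + 'V_P[fun t => (neg_part X t `^ (r / 2))%R] `^ (2 / r)%R
    <= 'V_P[X]
  /\
  'V_P[X] <=
    2%:E * ('V_P[fun t => (pos_part X t `^ (s / 2))%R] `^ (2 / s)%R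
            + 'V_P[fun t => (neg_part X t `^ (s / 2))%R] `^ (2 / s)%R).
Proof.
move=> p2 Xp r0 r2 s2 sp; have p1 : (1 <= p)%R by rewrite (le_trans _ p2) ?ler1n.
have Pfin : P setT \is a fin_num := fin_num_measure P _ measurableT.
have Lp2 : {subset Lfun P p%:E <= Lfun P 2%:E}.
  by apply: Lfun_subset; rewrite ?lee_fin ?ler1n.
have Yp := Lfun_pos_part p1 Xp; have Zp := Lfun_neg_part p1 Xp.
have [Y2 Z2] := (Lp2 _ Yp, Lp2 _ Zp).
have Y0 := pos_part_ge0 X; have Z0 := neg_part_ge0 X.
have -> : 'V_P[X] = 'V_P[pos_part X \- neg_part X]%R by rewrite -pos_neg_partE.
split.
  apply: le_trans (varianceB_ge Y2 Z2 _).
    by rewrite leeD ?variance_halfpowR_le.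
  by rewrite covariance_le0 ?pos_neg_partM ?Lfun_subset12.
rewrite (le_trans (varianceB_le Y2 Z2)) // lee_pmul2l //.
by rewrite leeD ?(variance_le_halfpowR _ p1).
Qed.
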